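(* Let $G$ be strongly connected and $C\subseteq V$. For each of the dynamics BD-B, BD-D, DB-B, DB-D and LD defined below, let $F^{(r)}_C$ denote the fixation probability of $C$ under that dynamics with mutant fitness $r$. Then for every $r>1$, $F^{(1)}_C\le F^{(r)}_C$.
   Context: Let $G=(V,E)$ be a finite directed graph with $N=|V|$ vertices and weight matrix $W=[w_{ij}]$, $w_{ij}>0$ iff $(i,j)\in E$, $\sum_j w_{ij}=1$ for all $i$. A configuration is a set of mutants; the fitness of a vertex is $f_k=r$ if it is a mutant and $f_k=1$ otherwise (evaluated in the current configuration). Starting from configuration $C$ at time $0$, each time step applies one of the following update rules (the rule being fixed throughout): BD-B: choose $i$ with probability $f_i/\sum_k f_k$, then $j$ with probability $w_{ij}$; $j$ takes the type of $i$. BD-D: choose $i$ uniformly ($1/N$), then $j$ with probability $w_{ij}f_j^{-1}/\sum_q w_{iq}f_q^{-1}$; $j$ takes the type of $i$. DB-B: choose $j$ uniformly ($1/N$), then $i$ with probability $w_{ij}f_i/\sum_q w_{qj}f_q$; $j$ takes the type of $i$. DB-D: choose $j$ with probability $f_j^{-1}/\sum_k f_k^{-1}$, then $i$ with probability $w_{ij}/\sum_q w_{qj}$; $j$ takes the type of $i$. LD: choose an edge $(i,j)\in E$ with probability $w_{ij}f_i/\sum_{(q,\ell)\in E}w_{q\ell}f_q$; $j$ takes the type of $i$. The fixation probability is the limit as $t\to\infty$ of the probability that all vertices are mutants at time $t$; $r=1$ is neutral drift. *)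

From Stdlib Require Import Reals.
Open Scope R_scope.

(* Vertices are 0, ..., N-1.  A weight matrix is W : nat -> nat -> R
   (only entries with indices < N matter).  A configuration (set of mutants)
   is C : nat -> bool (only values on 0..N-1 matter). *)

Fixpoint rsum (n : nat) (f : nat -> R) : R :=
  match n with
  | O => 0
  | S m => rsum m f + f m
  end.

Definition is_weight_matrix (N : nat) (W : nat -> nat -> R) : Prop :=
  (forall i j, (i < N)%nat -> (j < N)%nat -> 0 <= W i j) /\
  (forall i, (i < N)%nat -> rsum N (fun j => W i j) = 1).

Inductive reach (N : nat) (W : nat -> nat -> R) (i : nat) : nat -> Prop :=
  | reach_refl : reach N W i i
  | reach_step : forall k j, reach N W i k -> (j < N)%nat -> W k j > 0 ->
                 reach N W i j.

Definition strongly_connected (N : nat) (W : nat -> nat -> R) : Prop :=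
  forall i j, (i < N)%nat -> (j < N)%nat -> reach N W i j.

Definition fit (r : R) (C : nat -> bool) (k : nat) : R :=
  if C k then r else 1.

Inductive Dynamics := BD_B | BD_D | DB_B | DB_D | LD.

(* probability that, in one step from configuration C, vertex i reproduces
   onto vertex j (j takes the type of i). *)
Definition step_prob (d : Dynamics) (N : nat) (W : nat -> nat -> R) (r : R)
  (C : nat -> bool) (i j : nat) : R :=
  let f := fit r C in
  match d with
  | BD_B => f i / rsum N f * W i j
  | BD_D => / INR N * (W i j / f j / rsum N (fun q => W i q / f q))
  | DB_B => / INR N * (W i j * f i / rsum N (fun q => W q j * f q))
  | DB_D => / f j / rsum N (fun k => / f k) * (W i j / rsum N (fun q => W q j))
  | LD => W i j * f i / rsum N (fun q => rsum N (fun l => W q l * f q))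
  end.

Definition update (C : nat -> bool) (i j : nat) : nat -> bool :=
  fun k => if Nat.eqb k j then C i else C k.

Fixpoint all_mutant (N : nat) (C : nat -> bool) : bool :=
  match N with
  | O => true
  | S m => all_mutant m C && C m
  end.

Fixpoint prob_all_mutant (d : Dynamics) (N : nat) (W : nat -> nat -> R) (r : R)
  (t : nat) (C : nat -> bool) : R :=
  match t with
  | O => if all_mutant N C then 1 else 0
  | S t' => rsum N (fun i => rsum N (fun j =>
              step_prob d N W r C i j * prob_all_mutant d N W r t' (update C i j)))
  end.

From Stdlib Require Import Reals Lra Lia Classical Bool.
Open Scope R_scope.

(* Let a(i,j) be the neutral reproduction rates of the update rule (W, or W
   normalized by in-weights for the death-birth rules) and pi a stationary
   probability of the backward rates a(j,i); it exists for any nonnegative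
   rate matrix, by elimination of states.  The potential
   Phi(C) = sum_{k in C} pi_k is the pi-weight of the mutant set:
   - at r = 1 the step probabilities are a/N, the drift of Phi vanishes, so
     Phi is a martingale and dominates the probability of full fixation at
     every time, hence the neutral fixation probability F1(C);
   - at r > 1 selection favours mutant-to-resident transitions over the
     neutral ones, so the drift is nonnegative and Phi is a submartingale.
     The fixation probability Fr is harmonic, and Phi - Fr is subharmonic and
     vanishes at both absorbing configurations; since strong connectivity
     gives every mixed configuration a mutant-to-resident transition of
     uniformly positive probability, a maximum principle gives Phi <= Fr.
   Full fixation is absorbing, so both fixation probabilities exist as
   monotone limits, and F1(C) <= Phi(C) <= Fr(C). *)

Lemma rsum_ext n f g : (forall k, (k < n)%nat -> f k = g k) -> rsum n f = rsum n g.
Proof.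
  induction n as [|n IH]; simpl; intros H; auto.
  rewrite IH by (intros; apply H; lia). rewrite H by lia. reflexivity.
Qed.

Lemma rsum_plus n f g : rsum n (fun k => f k + g k) = rsum n f + rsum n g.
Proof. induction n; simpl; [lra|]. rewrite IHn; lra. Qed.

Lemma rsum_scal n c f : rsum n (fun k => c * f k) = c * rsum n f.
Proof. induction n; simpl; [lra|]. rewrite IHn; lra. Qed.

Lemma rsum_scal_r n c f : rsum n (fun k => f k * c) = rsum n f * c.
Proof. induction n; simpl; [lra|]. rewrite IHn; lra. Qed.

Lemma rsum_const n c : rsum n (fun _ => c) = INR n * c.
Proof. induction n; simpl rsum; [simpl; lra|]. rewrite IHn, S_INR; lra. Qed.

Lemma rsum_zero n f : (forall k, (k < n)%nat -> f k = 0) -> rsum n f = 0.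
Proof. intros H. rewrite (rsum_ext n f (fun _ => 0)) by auto. rewrite rsum_const; lra. Qed.

Lemma rsum_le n f g : (forall k, (k < n)%nat -> f k <= g k) -> rsum n f <= rsum n g.
Proof.
  induction n; simpl; intros H; [lra|].
  assert (f n <= g n) by (apply H; lia).
  assert (rsum n f <= rsum n g) by (apply IHn; intros; apply H; lia). lra.
Qed.

Lemma rsum_nonneg n f : (forall k, (k < n)%nat -> 0 <= f k) -> 0 <= rsum n f.
Proof. intros H. rewrite <- (rsum_zero n (fun _ => 0)) by auto. apply rsum_le; auto. Qed.

Lemma rsum_ge_term n f k :
  (forall i, (i < n)%nat -> 0 <= f i) -> (k < n)%nat -> f k <= rsum n f.
Proof.
  induction n; simpl; intros H Hk; [lia|].
  assert (0 <= rsum n f) by (apply rsum_nonneg; intros; apply H; lia).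
  destruct (Nat.eq_dec k n) as [->|Hkn]; [lra|].
  assert (f k <= rsum n f) by (apply IHn; [intros; apply H; lia | lia]).
  assert (0 <= f n) by (apply H; lia). lra.
Qed.

Lemma rsum_swap n m F :
  rsum n (fun i => rsum m (fun j => F i j)) = rsum m (fun j => rsum n (fun i => F i j)).
Proof.
  induction n; simpl.
  - rewrite (rsum_const m 0); lra.
  - rewrite IHn, <- rsum_plus. reflexivity.
Qed.

Lemma rsum_update n f g j : (j < n)%nat ->
  (forall k, (k < n)%nat -> k <> j -> f k = g k) -> rsum n f = rsum n g + f j - g j.
Proof.
  induction n; simpl; intros Hj H; [lia|].
  destruct (Nat.eq_dec j n) as [->|Hjn].
  - rewrite (rsum_ext n f g) by (intros; apply H; lia). lra.
  - rewrite IHn by (lia || (intros; apply H; lia)). rewrite (H n) by lia. lra.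
Qed.

Lemma Un_cv_const c : Un_cv (fun _ => c) c.
Proof. intros e He. exists 0%nat. intros. unfold Rdist. rewrite Rminus_diag, Rabs_R0; lra. Qed.

Lemma Un_cv_ext u v l : (forall t, u t = v t) -> Un_cv v l -> Un_cv u l.
Proof. intros H Hv e He. destruct (Hv e He) as [M HM]. exists M. intros n Hn. rewrite H. auto. Qed.

Lemma rsum_cv n (u : nat -> nat -> R) (l : nat -> R) :
  (forall k, (k < n)%nat -> Un_cv (u k) (l k)) ->
  Un_cv (fun t => rsum n (fun k => u k t)) (rsum n l).
Proof.
  induction n; simpl; intros H.
  - apply Un_cv_const.
  - apply CV_plus; [apply IHn; intros|]; apply H; lia.
Qed.

Definition balanced n (q : nat -> nat -> R) (pi : nat -> R) : Prop :=
  forall i, (i < n)%nat -> rsum n (fun j => pi j * q j i) = pi i * rsum n (fun j => q i j).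

Lemma balanced_scale n q pi c : balanced n q pi -> balanced n q (fun k => c * pi k).
Proof.
  intros H i Hi. rewrite (rsum_ext n _ (fun j => c * (pi j * q j i))) by (intros; ring).
  rewrite rsum_scal, H by auto. ring.
Qed.

Lemma balanced_absorbing n q :
  (forall i j, (i <= n)%nat -> (j <= n)%nat -> 0 <= q i j) ->
  rsum n (fun j => q n j) = 0 ->
  balanced (S n) q (fun k => if Nat.eqb k n then 1 else 0).
Proof.
  intros Hq HD i Hi. simpl rsum.
  rewrite (rsum_zero n (fun j => _ * _))
    by (intros k Hk; destruct (Nat.eqb_spec k n); [lia|lra]).
  rewrite Nat.eqb_refl. destruct (Nat.eqb_spec i n) as [->|Hin].
  - rewrite HD. lra.
  - assert (q n i <= rsum n (fun j => q n j))
      by (apply (rsum_ge_term n (fun j => q n j)); [intros; apply Hq|]; lia).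
    assert (0 <= q n i) by (apply Hq; lia). lra.
Qed.

(* Elimination of the last state n: a balanced measure [nu] for the reduced
   rates [q'], in which every passage through n is short-circuited, extends to
   a balanced measure for [q] by giving n the mass of its inflow divided by
   its outflow [D]. *)
Lemma balanced_eliminate n q nu :
  let D := rsum n (fun j => q n j) in
  let q' := fun i j => q i j + q i n * q n j / D in
  let X := rsum n (fun i => nu i * q i n) in
  0 < D -> balanced n q' nu ->
  balanced (S n) q (fun k => if Nat.eqb k n then X / D else nu k).
Proof.
  intros D q' X HD Hnu i Hi. simpl rsum.
  rewrite (rsum_ext n (fun j => _ * q j i) (fun j => nu j * q j i))
    by (intros k Hk; destruct (Nat.eqb_spec k n); [lia|auto]).
  rewrite Nat.eqb_refl. destruct (Nat.eqb_spec i n) as [->|Hin].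
  - fold X D. field. lra.
  - specialize (Hnu i ltac:(lia)). unfold q' in Hnu.
    rewrite (rsum_ext n (fun j => nu j * _)
      (fun j => nu j * q j i + (nu j * q j n) * (q n i / D))) in Hnu by (intros; field; lra).
    rewrite rsum_plus, rsum_scal_r in Hnu. fold X in Hnu.
    rewrite (rsum_ext n (fun j => q i j + _) (fun j => q i j + (q i n / D) * q n j))
      in Hnu by (intros; field; lra).
    rewrite rsum_plus, rsum_scal in Hnu. fold D in Hnu.
    replace (X / D * q n i) with (X * (q n i / D)) by (field; lra).
    rewrite Hnu. change (rsum n (q n)) with D.
    change (rsum n (q i)) with (rsum n (fun j => q i j)). field. lra.
Qed.

Lemma balanced_measure_exists n q :
  (forall i j, (i <= n)%nat -> (j <= n)%nat -> 0 <= q i j) ->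
  exists pi, (forall i, (i <= n)%nat -> 0 <= pi i) /\ 0 < rsum (S n) pi /\ balanced (S n) q pi.
Proof.
  revert q. induction n as [|n IH]; intros q Hq.
  - exists (fun _ => 1). split; [intros; lra|]. split; [simpl; lra|].
    intros i Hi. replace i with 0%nat by lia. simpl. lra.
  - set (D := rsum (S n) (fun j => q (S n) j)).
    assert (HD : 0 <= D) by (apply rsum_nonneg; intros; apply Hq; lia).
    destruct (Req_dec D 0) as [HD0|HDp].
    + exists (fun k => if Nat.eqb k (S n) then 1 else 0).
      split; [intros k _; destruct (Nat.eqb k (S n)); lra|].
      split; [|apply balanced_absorbing; auto].
      change (0 < rsum (S n) (fun k => if Nat.eqb k (S n) then 1 else 0)
                  + (if Nat.eqb (S n) (S n) then 1 else 0)).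
      rewrite rsum_zero by (intros k Hk; destruct (Nat.eqb_spec k (S n)); [lia|auto]).
      rewrite Nat.eqb_refl. lra.
    + destruct (IH (fun i j => q i j + q i (S n) * q (S n) j / D)) as [nu [Hnu0 [Hnu1 Hnu2]]].
      { intros i j Hi Hj.
        assert (0 <= q i (S n) * q (S n) j / D).
        { apply Rmult_le_pos; [apply Rmult_le_pos; apply Hq; lia|].
          left; apply Rinv_0_lt_compat; lra. }
        assert (0 <= q i j) by (apply Hq; lia). lra. }
      set (X := rsum (S n) (fun i => nu i * q i (S n))).
      assert (HX : 0 <= X)
        by (apply rsum_nonneg; intros; apply Rmult_le_pos; [apply Hnu0|apply Hq]; lia).
      assert (Hs : 0 <= X / D) by (apply Rmult_le_pos; [lra|left; apply Rinv_0_lt_compat; lra]).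
      exists (fun k => if Nat.eqb k (S n) then X / D else nu k).
      split; [intros i Hi; destruct (Nat.eqb_spec i (S n)); [lra|apply Hnu0; lia]|].
      split; [|apply balanced_eliminate; [fold D; lra|exact Hnu2]].
      change (0 < rsum (S n) (fun k => if Nat.eqb k (S n) then X / D else nu k)
                  + (if Nat.eqb (S n) (S n) then X / D else nu (S n))).
      rewrite (rsum_ext _ _ nu) by (intros k Hk; destruct (Nat.eqb_spec k (S n)); [lia|auto]).
      rewrite Nat.eqb_refl. lra.
Qed.

Lemma stationary_exists n q : (1 <= n)%nat ->
  (forall i j, (i < n)%nat -> (j < n)%nat -> 0 <= q i j) ->
  exists pi, (forall i, (i < n)%nat -> 0 <= pi i) /\ rsum n pi = 1 /\ balanced n q pi.
Proof.
  intros Hn Hq. destruct n as [|m]; [lia|].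
  destruct (balanced_measure_exists m q) as [pi [Hpi0 [Hpi1 Hpi2]]]; [intros; apply Hq; lia|].
  exists (fun k => / rsum (S m) pi * pi k).
  assert (0 < / rsum (S m) pi) by (apply Rinv_0_lt_compat; auto).
  split; [intros i Hi; apply Rmult_le_pos; [lra|apply Hpi0; lia]|].
  split; [rewrite rsum_scal; field; lra|]. apply balanced_scale; auto.
Qed.

(* A kernel P gives, in configuration C, the probability P C i j that i
   reproduces onto j; [dsum] sums over all ordered pairs of vertices. *)
Definition dsum N (F : nat -> nat -> R) : R := rsum N (fun i => rsum N (fun j => F i j)).

Definition stochastic N (P : (nat -> bool) -> nat -> nat -> R) : Prop :=
  (forall C i j, (i < N)%nat -> (j < N)%nat -> 0 <= P C i j) /\
  (forall C, dsum N (P C) = 1).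

Definition expect N (P : (nat -> bool) -> nat -> nat -> R) (f : (nat -> bool) -> R)
  (C : nat -> bool) : R :=
  dsum N (fun i j => P C i j * f (update C i j)).

Fixpoint absorb N (P : (nat -> bool) -> nat -> nat -> R) (t : nat) (C : nat -> bool) : R :=
  match t with
  | O => if all_mutant N C then 1 else 0
  | S t' => expect N P (absorb N P t') C
  end.

Lemma prob_all_mutant_absorb d N W r t C :
  prob_all_mutant d N W r t C = absorb N (step_prob d N W r) t C.
Proof.
  revert C; induction t; intros C; simpl; auto.
  apply rsum_ext; intros; apply rsum_ext; intros. rewrite IHt; auto.
Qed.

Lemma dsum_le N F G : (forall i j, (i < N)%nat -> (j < N)%nat -> F i j <= G i j) ->
  dsum N F <= dsum N G.
Proof. intros H. apply rsum_le; intros. apply rsum_le; intros; auto. Qed.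

Lemma dsum_nonneg N F : (forall i j, (i < N)%nat -> (j < N)%nat -> 0 <= F i j) ->
  0 <= dsum N F.
Proof. intros H. apply rsum_nonneg; intros. apply rsum_nonneg; intros; auto. Qed.

Lemma dsum_plus N F G : dsum N (fun i j => F i j + G i j) = dsum N F + dsum N G.
Proof.
  unfold dsum. rewrite <- rsum_plus. apply rsum_ext; intros. apply rsum_plus.
Qed.

Lemma dsum_scal N c F : dsum N (fun i j => c * F i j) = c * dsum N F.
Proof.
  unfold dsum. rewrite <- rsum_scal. apply rsum_ext; intros. apply rsum_scal.
Qed.

Lemma dsum_ext N F G : (forall i j, (i < N)%nat -> (j < N)%nat -> F i j = G i j) ->
  dsum N F = dsum N G.
Proof. intros H. apply rsum_ext; intros. apply rsum_ext; intros; auto. Qed.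

Lemma all_mutant_iff N C : all_mutant N C = true <-> forall k, (k < N)%nat -> C k = true.
Proof.
  induction N; simpl; split; intros H.
  - intros; lia.
  - auto.
  - apply andb_true_iff in H as [H1 H2]. intros k Hk.
    destruct (Nat.eq_dec k N) as [->|]; auto. apply IHN; auto; lia.
  - apply andb_true_iff; split; [apply IHN; intros|]; apply H; lia.
Qed.

Lemma update_all_mutant N C i j :
  (i < N)%nat -> all_mutant N C = true -> all_mutant N (update C i j) = true.
Proof.
  rewrite !all_mutant_iff. intros Hi H k Hk. unfold update. destruct (Nat.eqb k j); auto.
Qed.

Section Chain.

Variable N : nat.
Variable P : (nat -> bool) -> nat -> nat -> R.
Hypothesis HP : stochastic N P.

Lemma expect_mono f g : (forall C, f C <= g C) -> forall C, expect N P f C <= expect N P g C.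
Proof.
  intros H C. apply dsum_le; intros. apply Rmult_le_compat_l; auto. apply HP; auto.
Qed.

Lemma expect_const c C : expect N P (fun _ => c) C = c.
Proof.
  unfold expect. rewrite (dsum_ext N _ (fun i j => c * P C i j)) by (intros; ring).
  rewrite dsum_scal. destruct HP as [_ Hs]. rewrite Hs. ring.
Qed.

Lemma expect_minus f g C :
  expect N P (fun C' => f C' - g C') C = expect N P f C - expect N P g C.
Proof.
  unfold expect. rewrite (dsum_ext N _ (fun i j => P C i j * f (update C i j)
    + (-1) * (P C i j * g (update C i j)))) by (intros; ring).
  rewrite dsum_plus, dsum_scal. ring.
Qed.

Lemma expect_ge_term f C i j : (i < N)%nat -> (j < N)%nat -> (forall C', 0 <= f C') ->
  P C i j * f (update C i j) <= expect N P f C.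
Proof.
  intros Hi Hj Hf. destruct HP as [Hn _].
  assert (Hterm : forall i j, (i < N)%nat -> (j < N)%nat -> 0 <= P C i j * f (update C i j))
    by (intros; apply Rmult_le_pos; auto).
  eapply Rle_trans; [apply (rsum_ge_term N (fun j => P C i j * f (update C i j))); auto|].
  apply (rsum_ge_term N (fun i => rsum N (fun j => P C i j * f (update C i j)))); auto.
  intros; apply rsum_nonneg; auto.
Qed.

Lemma absorb_bounds t C : 0 <= absorb N P t C <= 1.
Proof.
  revert C; induction t; intros C; simpl.
  - destruct (all_mutant N C); lra.
  - rewrite <- (expect_const 0 C), <- (expect_const 1 C) at 1.
    split; apply expect_mono; intros; apply IHt.
Qed.

Lemma absorb_all_mutant t C : all_mutant N C = true -> absorb N P t C = 1.
Proof.
  revert C; induction t; intros C HC; simpl.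
  - rewrite HC; auto.
  - rewrite <- (expect_const 1 C). apply dsum_ext; intros.
    rewrite IHt; auto. apply update_all_mutant; auto.
Qed.

Lemma absorb_no_mutant t C : (1 <= N)%nat ->
  (forall k, (k < N)%nat -> C k = false) -> absorb N P t C = 0.
Proof.
  intros HN. revert C; induction t; intros C HC; simpl.
  - destruct (all_mutant N C) eqn:E; auto. rewrite all_mutant_iff in E.
    specialize (E 0%nat ltac:(lia)). rewrite HC in E by lia. discriminate.
  - unfold expect, dsum. apply rsum_zero; intros i Hi; apply rsum_zero; intros j Hj.
    rewrite IHt; [ring|]. intros k Hk. unfold update. destruct (Nat.eqb k j); auto.
Qed.

(* Full fixation is absorbing, so its probability grows with time. *)
Lemma absorb_grow t C : absorb N P t C <= absorb N P (S t) C.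
Proof.
  revert C; induction t; intros C.
  - destruct (all_mutant N C) eqn:E.
    + rewrite (absorb_all_mutant 1 C E). simpl. rewrite E. lra.
    + simpl absorb at 1. rewrite E. apply (absorb_bounds 1 C).
  - apply expect_mono; auto.
Qed.

Lemma absorb_cv C : {l | Un_cv (fun t => absorb N P t C) l}.
Proof.
  apply growing_cv; [intros t; apply absorb_grow|].
  exists 1. intros x [t ->]. apply absorb_bounds.
Qed.

Lemma fixation_exists : exists g, forall C, Un_cv (fun t => absorb N P t C) (g C).
Proof. exists (fun C => proj1_sig (absorb_cv C)). intros C. apply proj2_sig. Qed.

Section Fixation.

Variable g : (nat -> bool) -> R.
Hypothesis Hg : forall C, Un_cv (fun t => absorb N P t C) (g C).

Lemma fixation_harmonic C : g C = expect N P g C.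
Proof.
  apply (UL_sequence (fun t => absorb N P (S t) C)).
  - apply (Un_cv_ext _ (fun t => absorb N P (t + 1) C)); [intros; rewrite Nat.add_1_r; auto|].
    apply (CV_shift' (fun t => absorb N P t C) 1), Hg.
  - apply rsum_cv; intros. apply rsum_cv; intros. apply CV_mult; [apply Un_cv_const|apply Hg].
Qed.

Lemma fixation_limit_const C c : (forall t, absorb N P t C = c) -> g C = c.
Proof.
  intros H. apply (UL_sequence (fun t => absorb N P t C)); auto.
  apply (Un_cv_ext _ _ _ H), Un_cv_const.
Qed.

Lemma fixation_nonneg C : 0 <= g C.
Proof.
  apply (Rle_cv_lim (Un := fun _ => 0) (Vn := fun t => absorb N P t C)); auto.
  - intros; apply absorb_bounds.
  - apply Un_cv_const.
Qed.

End Fixation.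

End Chain.

Definition indb (b : bool) : R := if b then 1 else 0.

Definition potential N (pi : nat -> R) (C : nat -> bool) : R :=
  rsum N (fun k => indb (C k) * pi k).

(* The expected one-step increase of the potential under the kernel P. *)
Definition drift N (P : (nat -> bool) -> nat -> nat -> R) (pi : nat -> R) (C : nat -> bool) : R :=
  dsum N (fun i j => P C i j * ((indb (C i) - indb (C j)) * pi j)).

Lemma potential_update N pi C i j : (j < N)%nat ->
  potential N pi (update C i j) = potential N pi C + (indb (C i) - indb (C j)) * pi j.
Proof.
  intros Hj. unfold potential.
  rewrite (rsum_update N _ (fun k => indb (C k) * pi k) j Hj).
  - unfold update. rewrite Nat.eqb_refl. ring.
  - intros k Hk Hkj. unfold update. destruct (Nat.eqb_spec k j); [lia|auto].
Qed.

Lemma expect_potential N P pi C : stochastic N P ->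
  expect N P (potential N pi) C = potential N pi C + drift N P pi C.
Proof.
  intros HP. unfold expect, drift.
  rewrite (dsum_ext N _ (fun i j => potential N pi C * P C i j
    + P C i j * ((indb (C i) - indb (C j)) * pi j)))
    by (intros; rewrite potential_update; auto; ring).
  rewrite dsum_plus, dsum_scal. destruct HP as [_ ->]. ring.
Qed.

Lemma potential_all_mutant N pi C : rsum N pi = 1 -> all_mutant N C = true ->
  potential N pi C = 1.
Proof.
  intros H1 H2. rewrite all_mutant_iff in H2. unfold potential. rewrite <- H1.
  apply rsum_ext. intros. rewrite H2; auto. unfold indb; ring.
Qed.

Lemma potential_no_mutant N pi C : (forall k, (k < N)%nat -> C k = false) ->
  potential N pi C = 0.
Proof. intros H. apply rsum_zero. intros; rewrite H; auto. unfold indb; ring. Qed.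

Lemma potential_bounds N pi C : (forall i, (i < N)%nat -> 0 <= pi i) -> rsum N pi = 1 ->
  0 <= potential N pi C <= 1.
Proof.
  intros H1 H2. unfold potential. split.
  - apply rsum_nonneg; intros. apply Rmult_le_pos; auto. unfold indb; destruct (C k); lra.
  - rewrite <- H2. apply rsum_le; intros. specialize (H1 k H). unfold indb; destruct (C k); lra.
Qed.

Lemma balanced_flux_zero N (a : nat -> nat -> R) pi C :
  balanced N (fun x y => a y x) pi ->
  dsum N (fun i j => a i j * ((indb (C i) - indb (C j)) * pi j)) = 0.
Proof.
  intros H.
  rewrite (dsum_ext N _ (fun i j => indb (C i) * (pi j * a i j) + (-1) * (a i j * indb (C j) * pi j)))
    by (intros; ring).
  rewrite dsum_plus, dsum_scal. unfold dsum.
  rewrite (rsum_ext N (fun i => rsum N (fun j => indb (C i) * _))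
    (fun i => indb (C i) * pi i * rsum N (fun j => a j i))).
  2:{ intros i Hi. rewrite rsum_scal, H; auto. ring. }
  rewrite rsum_swap.
  rewrite (rsum_ext N (fun j => rsum N (fun i => a i j * indb (C j) * pi j))
    (fun j => indb (C j) * pi j * rsum N (fun i => a i j))).
  2:{ intros. rewrite <- rsum_scal. apply rsum_ext; intros; ring. }
  ring.
Qed.

Definition favours_mutants N (Pc a : nat -> nat -> R) (C : nat -> bool) : Prop :=
  exists lam, forall i j, (i < N)%nat -> (j < N)%nat ->
    (C i = true -> C j = false -> lam * a i j <= Pc i j) /\
    (C i = false -> C j = true -> Pc i j <= lam * a i j).

(* Comparison with balanced rates: a kernel favouring mutants has
   nonnegative drift. *)
Lemma drift_nonneg N P (a : nat -> nat -> R) pi C :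
  (forall i, (i < N)%nat -> 0 <= pi i) ->
  balanced N (fun x y => a y x) pi -> favours_mutants N (P C) a C ->
  0 <= drift N P pi C.
Proof.
  intros Hpi Hb [lam Hlam].
  replace (drift N P pi C) with
    (dsum N (fun i j => (indb (C i) - indb (C j)) * (P C i j - lam * a i j) * pi j) +
     lam * dsum N (fun i j => a i j * ((indb (C i) - indb (C j)) * pi j))).
  - rewrite balanced_flux_zero by auto. rewrite Rmult_0_r, Rplus_0_r.
    apply dsum_nonneg. intros i j Hi Hj. apply Rmult_le_pos; [|auto].
    destruct (Hlam i j Hi Hj) as [Hmr Hrm]. unfold indb.
    destruct (C i), (C j).
    + lra.
    + specialize (Hmr eq_refl eq_refl). lra.
    + specialize (Hrm eq_refl eq_refl). lra.
    + lra.
  - unfold drift. rewrite <- dsum_scal, <- dsum_plus. apply dsum_ext; intros. ring.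
Qed.

Fixpoint residents (N : nat) (C : nat -> bool) : nat :=
  match N with O => O | S m => (residents m C + (if C m then 0 else 1))%nat end.

Lemma residents_ext N C C' : (forall k, (k < N)%nat -> C k = C' k) ->
  residents N C = residents N C'.
Proof.
  induction N; simpl; intros H; auto.
  rewrite IHN by (intros; apply H; lia). rewrite H by lia. auto.
Qed.

Lemma residents_le N C : (residents N C <= N)%nat.
Proof. induction N; simpl; auto. destruct (C N); lia. Qed.

Lemma residents_zero N C : residents N C = O -> all_mutant N C = true.
Proof.
  rewrite all_mutant_iff. induction N; simpl; intros H k Hk; [lia|].
  destruct (C N) eqn:E; [|lia]. destruct (Nat.eq_dec k N) as [->|]; auto. apply IHN; lia.
Qed.

Lemma residents_pos N C : (0 < residents N C)%nat -> exists v, (v < N)%nat /\ C v = false.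
Proof.
  induction N; simpl; intros H; [lia|]. destruct (C N) eqn:E.
  - destruct IHN as [v [Hv Hc]]; [lia|]. exists v; split; auto.
  - exists N; auto.
Qed.

Lemma residents_update N C i j : (j < N)%nat -> C i = true -> C j = false ->
  (residents N (update C i j) + 1 = residents N C)%nat.
Proof.
  induction N; intros Hj Hi Hjf; [lia|]. simpl.
  destruct (Nat.eq_dec j N) as [->|Hjn].
  - rewrite (residents_ext N (update C i N) C)
      by (intros k Hk; unfold update; destruct (Nat.eqb_spec k N); [lia|auto]).
    unfold update at 1. rewrite Nat.eqb_refl, Hi, Hjf. lia.
  - rewrite <- IHN by (auto; lia). unfold update at 2. destruct (Nat.eqb_spec N j); [lia|]. lia.
Qed.

Definition mixing N (P : (nat -> bool) -> nat -> nat -> R) (dl : R) : Prop :=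
  forall C, (exists u, (u < N)%nat /\ C u = true) -> (exists v, (v < N)%nat /\ C v = false) ->
    exists i j, (i < N)%nat /\ (j < N)%nat /\ C i = true /\ C j = false /\ dl <= P C i j.

Lemma pow_le_decr (x : R) (k n : nat) : 0 < x <= 1 -> (k <= n)%nat -> x ^ n <= x ^ k.
Proof.
  intros Hx Hk. replace n with (k + (n - k))%nat by lia. rewrite pow_add.
  assert (0 < x ^ k) by (apply pow_lt; lra).
  assert (x ^ (n - k) <= 1) by (rewrite <- (pow1 (n - k)); apply pow_incr; lra).
  nra.
Qed.

Section Comparison.

Variable N : nat.
Variable P : (nat -> bool) -> nat -> nat -> R.
Hypothesis HP : stochastic N P.

Lemma fixation_le_potential pi g :
  (forall i, (i < N)%nat -> 0 <= pi i) -> rsum N pi = 1 ->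
  (forall C, drift N P pi C <= 0) ->
  (forall C, Un_cv (fun t => absorb N P t C) (g C)) ->
  forall C, g C <= potential N pi C.
Proof.
  intros Hpi0 Hpi1 Hdr Hg C.
  assert (Habs : forall t C, absorb N P t C <= potential N pi C).
  { induction t; intros C'; simpl.
    - destruct (all_mutant N C') eqn:E.
      + rewrite potential_all_mutant; auto; lra.
      + apply potential_bounds; auto.
    - eapply Rle_trans; [apply expect_mono; auto|].
      rewrite expect_potential by auto. specialize (Hdr C'). lra. }
  apply (Rle_cv_lim (Un := fun t => absorb N P t C) (Vn := fun _ => potential N pi C)); auto.
  apply Un_cv_const.
Qed.

Variable dl : R.
Hypothesis Hdl : 0 < dl <= 1.
Hypothesis Hmix : mixing N P dl.
Variable h : (nat -> bool) -> R.
Hypothesis Hsub : forall C, h C <= expect N P h C.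
Hypothesis Hfix : forall C, all_mutant N C = true -> h C <= 0.

(* From a configuration with k residents, a chain of k likely transitions
   reaches fixation, so h stays a definite fraction below its supremum. *)
Lemma subharmonic_gap M : (forall C, h C <= M) ->
  forall k C, residents N C = k -> (exists u, (u < N)%nat /\ C u = true) ->
  dl ^ k * M <= M - h C.
Proof.
  intros HM k. induction k as [|k IH]; intros C Hk Hu.
  - apply residents_zero, Hfix in Hk. simpl. lra.
  - destruct (residents_pos N C) as [v [Hv Hcv]]; [lia|].
    destruct (Hmix C Hu (ex_intro _ v (conj Hv Hcv))) as [i [j [Hi [Hj [Hci [Hcj Hp]]]]]].
    assert (Hk1 : residents N (update C i j) = k)
      by (pose proof (residents_update N C i j Hj Hci Hcj); lia).
    assert (Hu1 : exists u, (u < N)%nat /\ update C i j u = true)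
      by (exists j; split; auto; unfold update; rewrite Nat.eqb_refl; auto).
    specialize (IH _ Hk1 Hu1).
    assert (Hstep : P C i j * (M - h (update C i j)) <= M - h C).
    { eapply Rle_trans.
      - apply (expect_ge_term N P HP (fun C' => M - h C')); auto. intros; specialize (HM C'); lra.
      - rewrite expect_minus, expect_const by auto. specialize (Hsub C). lra. }
    assert (0 <= M - h (update C i j)) by (specialize (HM (update C i j)); lra).
    simpl. destruct (Rle_lt_dec 0 (dl ^ k * M)); nra.
Qed.

Hypothesis Hext : forall C, (forall k, (k < N)%nat -> C k = false) -> h C <= 0.
Hypothesis Hbound : exists B, forall C, h C <= B.

(* If h is moreover bounded and nonpositive when there are no mutants, then
   h <= 0: otherwise its supremum M > 0 would satisfy M <= (1 - dl^N) M. *)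
Lemma subharmonic_nonpos C : h C <= 0.
Proof.
  destruct (completeness (fun x => exists C, x = h C)) as [M [HM1 HM2]].
  { destruct Hbound as [B HB]. exists B. intros x [C' ->]. auto. }
  { exists (h C); eauto. }
  assert (Mub : forall C, h C <= M) by (intros; apply HM1; eauto).
  enough (M <= 0) by (specialize (Mub C); lra).
  destruct (Rle_lt_dec M 0) as [|HMpos]; auto. exfalso.
  assert (Hpow : 0 < dl ^ N <= 1)
    by (split; [apply pow_lt; lra|rewrite <- (pow1 N); apply pow_incr; lra]).
  assert (UB : forall C, h C <= M - dl ^ N * M).
  { intros C'. destruct (classic (exists u, (u < N)%nat /\ C' u = true)) as [Hu|Hu].
    - pose proof (subharmonic_gap M Mub _ C' eq_refl Hu).
      pose proof (pow_le_decr dl _ _ Hdl (residents_le N C')).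
      assert (dl ^ N * M <= dl ^ residents N C' * M) by (apply Rmult_le_compat_r; lra). lra.
    - assert (h C' <= 0); [|nra].
      apply Hext. intros k Hk. destruct (C' k) eqn:E; auto. exfalso; eauto. }
  assert (M <= M - dl ^ N * M) by (apply HM2; intros x [C' ->]; apply UB). nra.
Qed.

End Comparison.

(* A potential with nonnegative drift under a mixing kernel is dominated by
   the fixation probability: their difference is subharmonic and vanishes
   at both absorbing states. *)
Lemma potential_le_fixation N P pi g dl : stochastic N P -> (1 <= N)%nat ->
  (forall i, (i < N)%nat -> 0 <= pi i) -> rsum N pi = 1 ->
  (forall C, 0 <= drift N P pi C) -> 0 < dl <= 1 -> mixing N P dl ->
  (forall C, Un_cv (fun t => absorb N P t C) (g C)) ->
  forall C, potential N pi C <= g C.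
Proof.
  intros HP HN Hpi0 Hpi1 Hdr Hdl Hmix Hg C.
  enough (potential N pi C - g C <= 0) by lra.
  apply (subharmonic_nonpos N P HP dl Hdl Hmix (fun C' => potential N pi C' - g C')).
  - intros C'. rewrite expect_minus, expect_potential, <- (fixation_harmonic N P g Hg) by auto.
    specialize (Hdr C'). lra.
  - intros C' HC'. rewrite potential_all_mutant, (fixation_limit_const N P g Hg C' 1); auto.
    + lra.
    + intros; apply absorb_all_mutant; auto.
  - intros C' HC'. rewrite potential_no_mutant, (fixation_limit_const N P g Hg C' 0); auto.
    + lra.
    + intros; apply absorb_no_mutant; auto.
  - exists 1. intros C'. pose proof (potential_bounds N pi C' Hpi0 Hpi1).
    pose proof (fixation_nonneg N P HP g Hg C'). lra.
Qed.

Lemma weight_nonneg N W : is_weight_matrix N W ->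
  forall i j, (i < N)%nat -> (j < N)%nat -> 0 <= W i j.
Proof. intros [H _]; auto. Qed.

Lemma weight_le_1 N W : is_weight_matrix N W ->
  forall i j, (i < N)%nat -> (j < N)%nat -> W i j <= 1.
Proof.
  intros [H1 H2] i j Hi Hj. rewrite <- (H2 i Hi).
  apply (rsum_ge_term N (fun j => W i j)); auto.
Qed.

Definition colsum N (W : nat -> nat -> R) (j : nat) : R := rsum N (fun q => W q j).

Lemma reach_lt N W i k : reach N W i k -> k = i \/ (k < N)%nat.
Proof. induction 1; auto. Qed.

(* In a strongly connected graph every vertex has an incoming edge (a loop
   if N = 1, since the single row sums to 1). *)
Lemma in_edge_exists N W : is_weight_matrix N W -> strongly_connected N W ->
  forall j, (j < N)%nat -> exists k, (k < N)%nat /\ W k j > 0.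
Proof.
  intros HW HS j Hj. destruct N as [|[|N']]; [lia| |].
  - replace j with 0%nat by lia. exists 0%nat; split; [lia|].
    destruct HW as [_ H2]. specialize (H2 0%nat ltac:(lia)). simpl in H2. lra.
  - set (i := if Nat.eqb j 0 then 1%nat else 0%nat).
    assert (Hi : (i < S (S N'))%nat /\ i <> j) by (unfold i; destruct (Nat.eqb_spec j 0); lia).
    destruct Hi as [Hi Hij]. pose proof (HS i j Hi Hj) as Hr.
    inversion Hr as [Heq|k j' Rk Hj' Hw Heq]; [congruence|]. subst j'.
    exists k. split; auto. destruct (reach_lt _ _ _ _ Rk) as [->|]; auto.
Qed.

Lemma colsum_pos N W : is_weight_matrix N W -> strongly_connected N W ->
  forall j, (j < N)%nat -> 0 < colsum N W j.
Proof.
  intros HW HS j Hj. destruct (in_edge_exists N W HW HS j Hj) as [k [Hk Hw]].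
  assert (W k j <= colsum N W j); [|lra].
  apply (rsum_ge_term N (fun q => W q j)); auto. intros; apply (weight_nonneg N W HW); auto.
Qed.

Lemma colsum_le N W : is_weight_matrix N W -> forall j, (j < N)%nat -> colsum N W j <= INR N.
Proof.
  intros HW j Hj. unfold colsum. rewrite <- (Rmult_1_r (INR N)), <- rsum_const.
  apply rsum_le. intros; apply (weight_le_1 N W HW); auto.
Qed.

Lemma mutant_resident_edge N W C u v : (u < N)%nat -> C u = true -> C v = false ->
  reach N W u v ->
  exists i j, (i < N)%nat /\ (j < N)%nat /\ C i = true /\ C j = false /\ W i j > 0.
Proof.
  intros Hu Hcu Hcv Hr. induction Hr as [|k j Hr IH Hj Hw]; [congruence|].
  assert (Hk : (k < N)%nat) by (destruct (reach_lt _ _ _ _ Hr) as [->|]; auto).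
  destruct (C k) eqn:E; [exists k, j; auto|auto].
Qed.

Lemma positive_lower_bound n (f : nat -> R) :
  exists m, 0 < m <= 1 /\ forall k, (k < n)%nat -> 0 < f k -> m <= f k.
Proof.
  induction n as [|n [m [Hm Hmf]]].
  - exists 1. split; [lra|]. intros; lia.
  - destruct (Rlt_dec 0 (f n)) as [Hfn|Hfn].
    + exists (Rmin m (f n)). split; [split; [apply Rmin_glb_lt; lra|]|].
      * apply Rle_trans with m; [apply Rmin_l|lra].
      * intros k Hk Hfk. destruct (Nat.eq_dec k n) as [->|]; [apply Rmin_r|].
        apply Rle_trans with m; [apply Rmin_l|apply Hmf; auto; lia].
    + exists m. split; auto. intros k Hk Hfk.
      destruct (Nat.eq_dec k n) as [->|]; [lra|apply Hmf; auto; lia].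
Qed.

Lemma positive_lower_bound2 rows n (f : nat -> nat -> R) :
  exists m, 0 < m <= 1 /\
    forall i j, (i < rows)%nat -> (j < n)%nat -> 0 < f i j -> m <= f i j.
Proof.
  induction rows as [|rows [m [Hm Hmf]]].
  - exists 1. split; [lra|]. intros; lia.
  - destruct (positive_lower_bound n (f rows)) as [m' [Hm' Hm'f]].
    exists (Rmin m m'). split; [split; [apply Rmin_glb_lt; lra|]|].
    + apply Rle_trans with m; [apply Rmin_l|lra].
    + intros i j Hi Hj Hf. destruct (Nat.eq_dec i rows) as [->|].
      * apply Rle_trans with m'; [apply Rmin_r|auto].
      * apply Rle_trans with m; [apply Rmin_l|apply Hmf; auto; lia].
Qed.

Lemma fit_bounds r C k : 1 <= r -> 1 <= fit r C k <= r.
Proof. unfold fit; destruct (C k); lra. Qed.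

Lemma fit_neutral C k : fit 1 C k = 1.
Proof. unfold fit; destruct (C k); lra. Qed.

Lemma fit_mutant r C k : C k = true -> fit r C k = r.
Proof. unfold fit; intros ->; auto. Qed.

Lemma fit_resident r C k : C k = false -> fit r C k = 1.
Proof. unfold fit; intros ->; auto. Qed.

Lemma total_fitness_bounds N r C : 1 <= r -> INR N <= rsum N (fit r C) <= INR N * r.
Proof.
  intros Hr. rewrite <- (Rmult_1_r (INR N)) at 1. rewrite <- !rsum_const.
  split; apply rsum_le; intros; apply fit_bounds; auto.
Qed.

Lemma link_fitness_sum N W r C : is_weight_matrix N W ->
  rsum N (fun q => rsum N (fun l => W q l * fit r C q)) = rsum N (fit r C).
Proof. intros [_ H2]. apply rsum_ext. intros q Hq. rewrite rsum_scal_r, H2; auto; ring. Qed.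

Lemma out_norm_bounds N W r C i : is_weight_matrix N W -> 1 <= r -> (i < N)%nat ->
  / r <= rsum N (fun q => W i q / fit r C q) <= 1.
Proof.
  intros [H1 H2] Hr Hi. split.
  - replace (/ r) with (rsum N (fun q => W i q) * / r) by (rewrite H2; auto; ring).
    rewrite <- rsum_scal_r. apply rsum_le. intros q Hq. unfold Rdiv.
    pose proof (fit_bounds r C q Hr). apply Rmult_le_compat_l; auto.
    apply Rinv_le_contravar; lra.
  - rewrite <- (H2 i Hi). apply rsum_le. intros q Hq. unfold Rdiv.
    pose proof (fit_bounds r C q Hr).
    assert (/ fit r C q <= 1) by (rewrite <- Rinv_1; apply Rinv_le_contravar; lra).
    pose proof (H1 i q Hi Hq). nra.
Qed.

Lemma in_norm_bounds N W r C j : is_weight_matrix N W -> 1 <= r -> (j < N)%nat ->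
  colsum N W j <= rsum N (fun q => W q j * fit r C q) <= r * colsum N W j.
Proof.
  intros HW Hr Hj. unfold colsum. rewrite <- rsum_scal.
  split; apply rsum_le; intros q Hq; pose proof (weight_nonneg N W HW q j Hq Hj);
    pose proof (fit_bounds r C q Hr); nra.
Qed.

Lemma inv_fitness_bounds N r C : 1 <= r -> INR N * / r <= rsum N (fun k => / fit r C k) <= INR N.
Proof.
  intros Hr. rewrite <- (Rmult_1_r (INR N)) at 2. rewrite <- !rsum_const.
  split; apply rsum_le; intros k _; pose proof (fit_bounds r C k Hr);
    [|rewrite <- Rinv_1]; apply Rinv_le_contravar; lra.
Qed.

Lemma div_nonneg a b : 0 <= a -> 0 < b -> 0 <= a / b.
Proof. intros. unfold Rdiv. apply Rmult_le_pos; auto. left; apply Rinv_0_lt_compat; auto. Qed.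

Lemma INR_pos N : (1 <= N)%nat -> 0 < INR N.
Proof. intros; apply lt_0_INR; lia. Qed.

Lemma step_prob_nonneg d N W r : is_weight_matrix N W -> strongly_connected N W ->
  (1 <= N)%nat -> 1 <= r ->
  forall C i j, (i < N)%nat -> (j < N)%nat -> 0 <= step_prob d N W r C i j.
Proof.
  intros HW HS HN Hr C i j Hi Hj.
  pose proof (weight_nonneg N W HW i j Hi Hj).
  pose proof (fit_bounds r C i Hr). pose proof (fit_bounds r C j Hr).
  pose proof (total_fitness_bounds N r C Hr). pose proof (INR_pos N HN).
  assert (0 <= / INR N) by (left; apply Rinv_0_lt_compat; auto).
  destruct d; unfold step_prob; cbv zeta.
  - apply Rmult_le_pos; auto. apply div_nonneg; lra.
  - apply Rmult_le_pos; auto. apply div_nonneg; [apply div_nonneg; lra|].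
    pose proof (out_norm_bounds N W r C i HW Hr Hi).
    assert (0 < / r) by (apply Rinv_0_lt_compat; lra). lra.
  - apply Rmult_le_pos; auto. apply div_nonneg; [apply Rmult_le_pos; lra|].
    pose proof (in_norm_bounds N W r C j HW Hr Hj). pose proof (colsum_pos N W HW HS j Hj). lra.
  - pose proof (inv_fitness_bounds N r C Hr).
    assert (0 < / r) by (apply Rinv_0_lt_compat; lra).
    apply Rmult_le_pos; apply div_nonneg; try (apply colsum_pos; auto); auto; [|nra].
    left; apply Rinv_0_lt_compat; lra.
  - apply div_nonneg; [apply Rmult_le_pos; lra|]. rewrite link_fitness_sum by auto. lra.
Qed.

Lemma step_prob_total d N W r : is_weight_matrix N W -> strongly_connected N W ->
  (1 <= N)%nat -> 1 <= r -> forall C, dsum N (step_prob d N W r C) = 1.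
Proof.
  intros HW HS HN Hr C. pose proof (INR_pos N HN). unfold dsum.
  pose proof (total_fitness_bounds N r C Hr).
  destruct d; unfold step_prob; cbv zeta.
  - rewrite (rsum_ext N _ (fun i => fit r C i / rsum N (fit r C))).
    + unfold Rdiv. rewrite rsum_scal_r. field. lra.
    + intros i Hi. rewrite rsum_scal. destruct HW as [_ ->]; auto. ring.
  - rewrite (rsum_ext N _ (fun i => / INR N)); [rewrite rsum_const; field; lra|].
    intros i Hi. pose proof (out_norm_bounds N W r C i HW Hr Hi).
    assert (0 < / r) by (apply Rinv_0_lt_compat; lra).
    rewrite rsum_scal. unfold Rdiv. rewrite rsum_scal_r. field. lra.
  - rewrite rsum_swap, (rsum_ext N _ (fun j => / INR N)); [rewrite rsum_const; field; lra|].
    intros j Hj. pose proof (in_norm_bounds N W r C j HW Hr Hj).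
    pose proof (colsum_pos N W HW HS j Hj).
    rewrite rsum_scal. unfold Rdiv. rewrite rsum_scal_r. field. lra.
  - pose proof (inv_fitness_bounds N r C Hr). assert (0 < / r) by (apply Rinv_0_lt_compat; lra).
    rewrite rsum_swap, (rsum_ext N _ (fun j => / fit r C j / rsum N (fun k => / fit r C k))).
    + unfold Rdiv. rewrite rsum_scal_r. field. nra.
    + intros j Hj. pose proof (colsum_pos N W HW HS j Hj). pose proof (fit_bounds r C j Hr).
      unfold colsum in *. rewrite rsum_scal. unfold Rdiv. rewrite rsum_scal_r. field. nra.
  - rewrite link_fitness_sum by auto. unfold Rdiv.
    rewrite (rsum_ext N _ (fun i => rsum N (fun j => W i j * fit r C i) * / rsum N (fit r C)))
      by (intros; apply rsum_scal_r).
    rewrite rsum_scal_r, link_fitness_sum by auto. field. lra.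
Qed.

Lemma step_prob_stochastic d N W r : is_weight_matrix N W -> strongly_connected N W ->
  (1 <= N)%nat -> 1 <= r -> stochastic N (step_prob d N W r).
Proof. split; [apply step_prob_nonneg|apply step_prob_total]; auto. Qed.

(* Reproduction rates of the neutral process, up to the factor 1/N. *)
Definition neutral_rate (d : Dynamics) N (W : nat -> nat -> R) (i j : nat) : R :=
  match d with DB_B | DB_D => W i j / colsum N W j | _ => W i j end.

Lemma neutral_rate_nonneg d N W : is_weight_matrix N W -> strongly_connected N W ->
  forall i j, (i < N)%nat -> (j < N)%nat -> 0 <= neutral_rate d N W i j.
Proof.
  intros HW HS i j Hi Hj. pose proof (weight_nonneg N W HW i j Hi Hj).
  destruct d; simpl; auto; apply div_nonneg; auto; apply colsum_pos; auto.
Qed.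

Lemma step_prob_neutral d N W : is_weight_matrix N W -> (1 <= N)%nat ->
  forall C i j, (i < N)%nat -> (j < N)%nat ->
  step_prob d N W 1 C i j = / INR N * neutral_rate d N W i j.
Proof.
  intros HW HN C i j Hi Hj. pose proof (INR_pos N HN).
  assert (Hfit : rsum N (fit 1 C) = INR N).
  { rewrite (rsum_ext N _ (fun _ => 1)) by (intros; apply fit_neutral). rewrite rsum_const; ring. }
  destruct d; unfold step_prob, neutral_rate, colsum; cbv zeta; rewrite ?fit_neutral.
  - rewrite Hfit. field. lra.
  - rewrite (rsum_ext N (fun q => W i q / fit 1 C q) (fun q => W i q))
      by (intros; rewrite fit_neutral; field).
    destruct HW as [_ ->]; auto. field. lra.
  - rewrite (rsum_ext N (fun q => W q j * fit 1 C q) (fun q => W q j))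
      by (intros; rewrite fit_neutral; ring).
    rewrite Rmult_1_r; reflexivity.
  - rewrite (rsum_ext N (fun k => / fit 1 C k) (fun _ => 1))
      by (intros; rewrite fit_neutral; field).
    rewrite rsum_const. replace (/ 1 / (INR N * 1)) with (/ INR N) by (field; lra). reflexivity.
  - rewrite link_fitness_sum, Hfit by auto. field. lra.
Qed.

(* Link dynamics coincides with birth-death with selection on birth: the
   edge-weighted fitness total is the total fitness, since rows of W sum to 1. *)
Lemma step_prob_LD_BD_B N W r C i j : is_weight_matrix N W ->
  step_prob LD N W r C i j = step_prob BD_B N W r C i j.
Proof.
  intros HW. unfold step_prob; cbv zeta. rewrite link_fitness_sum by auto.
  unfold Rdiv. ring.
Qed.

Lemma favours_BD_B N W r C : is_weight_matrix N W -> (1 <= N)%nat -> 1 <= r ->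
  favours_mutants N (step_prob BD_B N W r C) (neutral_rate BD_B N W) C.
Proof.
  intros HW HN Hr. pose proof (total_fitness_bounds N r C Hr). pose proof (INR_pos N HN).
  assert (HF : 0 < / rsum N (fit r C)) by (apply Rinv_0_lt_compat; lra).
  exists (/ rsum N (fit r C)). intros i j Hi Hj.
  pose proof (weight_nonneg N W HW i j Hi Hj).
  unfold step_prob, neutral_rate; cbv zeta. unfold Rdiv.
  split; intros Ci Cj; [rewrite (fit_mutant r C i Ci)|rewrite (fit_resident r C i Ci)].
  - assert (0 <= (r - 1) * / rsum N (fit r C) * W i j); [|nra].
    apply Rmult_le_pos; [apply Rmult_le_pos|]; lra.
  - lra.
Qed.

Lemma favours_BD_D N W r C : is_weight_matrix N W -> (1 <= N)%nat -> 1 <= r ->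
  favours_mutants N (step_prob BD_D N W r C) (neutral_rate BD_D N W) C.
Proof.
  intros HW HN Hr. pose proof (INR_pos N HN).
  assert (HN' : 0 < / INR N) by (apply Rinv_0_lt_compat; lra).
  exists (/ INR N). intros i j Hi Hj.
  pose proof (weight_nonneg N W HW i j Hi Hj).
  pose proof (out_norm_bounds N W r C i HW Hr Hi).
  set (S := rsum N (fun q => W i q / fit r C q)) in *.
  assert (0 < / r) by (apply Rinv_0_lt_compat; lra).
  unfold step_prob, neutral_rate; cbv zeta. fold S.
  split; intros Ci Cj; [rewrite (fit_resident r C j Cj)|rewrite (fit_mutant r C j Cj)];
    apply Rmult_le_compat_l; try lra; unfold Rdiv.
  - assert (1 <= / S) by (rewrite <- Rinv_1; apply Rinv_le_contravar; lra).
    rewrite Rinv_1, Rmult_1_r. nra.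
  - assert (/ (r * S) <= 1).
    { rewrite <- Rinv_1. apply Rinv_le_contravar; [lra|].
      replace 1 with (r * / r) by (field; lra). nra. }
    rewrite Rmult_assoc, <- Rinv_mult. nra.
Qed.

Lemma favours_DB_B N W r C : is_weight_matrix N W -> strongly_connected N W ->
  (1 <= N)%nat -> 1 <= r ->
  favours_mutants N (step_prob DB_B N W r C) (neutral_rate DB_B N W) C.
Proof.
  intros HW HS HN Hr. pose proof (INR_pos N HN).
  assert (HN' : 0 < / INR N) by (apply Rinv_0_lt_compat; lra).
  exists (/ INR N). intros i j Hi Hj.
  pose proof (weight_nonneg N W HW i j Hi Hj).
  pose proof (in_norm_bounds N W r C j HW Hr Hj). pose proof (colsum_pos N W HW HS j Hj).
  set (T := rsum N (fun q => W q j * fit r C q)) in *.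
  unfold step_prob, neutral_rate; cbv zeta. fold T.
  split; intros Ci Cj; [rewrite (fit_mutant r C i Ci)|rewrite (fit_resident r C i Ci)];
    apply Rmult_le_compat_l; try lra; unfold Rdiv.
  - assert (Hinv : / (r * colsum N W j) <= / T) by (apply Rinv_le_contravar; lra).
    rewrite Rinv_mult in Hinv.
    assert (/ colsum N W j <= r * / T).
    { replace (/ colsum N W j) with (r * (/ r * / colsum N W j)) by (field; lra).
      apply Rmult_le_compat_l; lra. }
    nra.
  - assert (/ T <= / colsum N W j) by (apply Rinv_le_contravar; lra). nra.
Qed.

Lemma favours_DB_D N W r C : is_weight_matrix N W -> strongly_connected N W ->
  (1 <= N)%nat -> 1 <= r ->
  favours_mutants N (step_prob DB_D N W r C) (neutral_rate DB_D N W) C.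
Proof.
  intros HW HS HN Hr. pose proof (inv_fitness_bounds N r C Hr). pose proof (INR_pos N HN).
  assert (0 < / r) by (apply Rinv_0_lt_compat; lra).
  assert (HZ : 0 < / rsum N (fun k => / fit r C k)) by (apply Rinv_0_lt_compat; nra).
  exists (/ rsum N (fun k => / fit r C k)). intros i j Hi Hj.
  pose proof (weight_nonneg N W HW i j Hi Hj). pose proof (colsum_pos N W HW HS j Hj).
  assert (0 <= W i j / colsum N W j) by (apply div_nonneg; auto).
  unfold step_prob, neutral_rate; cbv zeta. unfold colsum. fold (colsum N W j).
  split; intros Ci Cj; [rewrite (fit_resident r C j Cj)|rewrite (fit_mutant r C j Cj)];
    unfold Rdiv; rewrite ?Rinv_1, ?Rmult_1_l.
  - lra.
  - assert (/ r <= 1) by (rewrite <- Rinv_1; apply Rinv_le_contravar; lra).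
    assert (0 <= / rsum N (fun k => / fit r C k) * (W i j * / colsum N W j))
      by (apply Rmult_le_pos; [lra|exact H4]).
    nra.
Qed.

Lemma step_prob_favours_mutants d N W r C :
  is_weight_matrix N W -> strongly_connected N W -> (1 <= N)%nat -> 1 <= r ->
  favours_mutants N (step_prob d N W r C) (neutral_rate d N W) C.
Proof.
  intros HW HS HN Hr. destruct d.
  - apply favours_BD_B; auto.
  - apply favours_BD_D; auto.
  - apply favours_DB_B; auto.
  - apply favours_DB_D; auto.
  - destruct (favours_BD_B N W r C HW HN Hr) as [lam Hlam]. exists lam.
    intros i j Hi Hj. rewrite step_prob_LD_BD_B by auto. apply Hlam; auto.
Qed.

Section LowerBound.

Variables (N : nat) (W : nat -> nat -> R) (r : R) (C : nat -> bool) (i j : nat).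
Hypotheses (HW : is_weight_matrix N W) (HS : strongly_connected N W)
  (HN : (1 <= N)%nat) (Hr : 1 <= r) (Hi : (i < N)%nat) (Hj : (j < N)%nat)
  (Hci : C i = true) (Hcj : C j = false).

Let Hn : 1 <= INR N := le_INR 1 N HN.
Let Hr' : 0 < / r := Rinv_0_lt_compat r (Rlt_le_trans 0 1 r Rlt_0_1 Hr).

Lemma weight_coefficient K : / (INR N * INR N) <= K -> W i j / (INR N * INR N) <= W i j * K.
Proof. intros HK. apply Rmult_le_compat_l; auto. apply (weight_nonneg N W HW); auto. Qed.

Lemma lower_BD_B : W i j / (INR N * INR N) <= step_prob BD_B N W r C i j.
Proof.
  pose proof (total_fitness_bounds N r C Hr).
  unfold step_prob; cbv zeta. rewrite (fit_mutant r C i Hci).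
  replace (r / rsum N (fit r C) * W i j) with (W i j * (r * / rsum N (fit r C)))
    by (unfold Rdiv; ring).
  apply weight_coefficient. replace (/ (INR N * INR N)) with (r * / (INR N * INR N * r))
    by (field; lra).
  apply Rmult_le_compat_l; [lra|]. apply Rinv_le_contravar; nra.
Qed.

Lemma lower_BD_D : W i j / (INR N * INR N) <= step_prob BD_D N W r C i j.
Proof.
  pose proof (out_norm_bounds N W r C i HW Hr Hi).
  unfold step_prob; cbv zeta. rewrite (fit_resident r C j Hcj).
  set (S := rsum N (fun q => W i q / fit r C q)) in *.
  replace (/ INR N * (W i j / 1 / S)) with (W i j * (/ INR N * / S)) by (field; lra).
  apply weight_coefficient. rewrite Rinv_mult.
  assert (/ INR N <= 1) by (rewrite <- Rinv_1; apply Rinv_le_contravar; lra).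
  assert (1 <= / S) by (rewrite <- Rinv_1; apply Rinv_le_contravar; lra).
  assert (0 < / INR N) by (apply Rinv_0_lt_compat; lra). nra.
Qed.

Lemma lower_DB_B : W i j / (INR N * INR N) <= step_prob DB_B N W r C i j.
Proof.
  pose proof (in_norm_bounds N W r C j HW Hr Hj). pose proof (colsum_pos N W HW HS j Hj).
  pose proof (colsum_le N W HW j Hj).
  unfold step_prob; cbv zeta. rewrite (fit_mutant r C i Hci).
  set (T := rsum N (fun q => W q j * fit r C q)) in *.
  replace (/ INR N * (W i j * r / T)) with (W i j * (r * (/ INR N * / T))) by (field; lra).
  apply weight_coefficient.
  replace (/ (INR N * INR N)) with (r * (/ INR N * / (r * INR N))) by (field; lra).
  apply Rmult_le_compat_l; [lra|]. apply Rmult_le_compat_l; [left; apply Rinv_0_lt_compat; lra|].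
  apply Rinv_le_contravar; nra.
Qed.

Lemma lower_DB_D : W i j / (INR N * INR N) <= step_prob DB_D N W r C i j.
Proof.
  pose proof (inv_fitness_bounds N r C Hr). pose proof (colsum_pos N W HW HS j Hj).
  pose proof (colsum_le N W HW j Hj).
  unfold step_prob; cbv zeta. rewrite (fit_resident r C j Hcj).
  change (rsum N (fun q => W q j)) with (colsum N W j).
  set (Z := rsum N (fun k => / fit r C k)) in *.
  replace (/ 1 / Z * (W i j / colsum N W j)) with (W i j * (/ Z * / colsum N W j))
    by (field; split; nra).
  apply weight_coefficient. rewrite Rinv_mult.
  assert (/ INR N <= / Z) by (apply Rinv_le_contravar; nra).
  assert (/ INR N <= / colsum N W j) by (apply Rinv_le_contravar; lra).
  assert (0 < / INR N) by (apply Rinv_0_lt_compat; lra). nra.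
Qed.

End LowerBound.

Lemma step_prob_lower d N W r : is_weight_matrix N W -> strongly_connected N W ->
  (1 <= N)%nat -> 1 <= r ->
  forall C i j, (i < N)%nat -> (j < N)%nat -> C i = true -> C j = false ->
  W i j / (INR N * INR N) <= step_prob d N W r C i j.
Proof.
  intros HW HS HN Hr C i j Hi Hj Hci Hcj. destruct d.
  - apply lower_BD_B; auto.
  - apply lower_BD_D; auto.
  - apply lower_DB_B; auto.
  - apply lower_DB_D; auto.
  - rewrite step_prob_LD_BD_B by auto. apply lower_BD_B; auto.
Qed.

Lemma step_prob_mixing d N W r : is_weight_matrix N W -> strongly_connected N W ->
  (1 <= N)%nat -> 1 <= r ->
  exists dl, 0 < dl <= 1 /\ mixing N (step_prob d N W r) dl.
Proof.
  intros HW HS HN Hr.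
  destruct (positive_lower_bound2 N N W) as [w [Hw Hwle]].
  assert (Hn : 1 <= INR N) by (apply (le_INR 1); auto).
  assert (Hn2 : 0 < / (INR N * INR N) <= 1).
  { split; [apply Rinv_0_lt_compat; nra|]. rewrite <- Rinv_1. apply Rinv_le_contravar; nra. }
  exists (w / (INR N * INR N)). split; [unfold Rdiv; split; nra|].
  intros C [u [Hu Hcu]] [v [Hv Hcv]].
  destruct (mutant_resident_edge N W C u v Hu Hcu Hcv (HS u v Hu Hv))
    as [i [j [Hi [Hj [Hci [Hcj Hwij]]]]]].
  exists i, j. repeat split; auto.
  apply Rle_trans with (W i j / (INR N * INR N)); [|apply step_prob_lower; auto].
  unfold Rdiv. apply Rmult_le_compat_r; [lra|]. apply Hwle; auto.
Qed.

Lemma neutral_drift_zero d N W pi C : is_weight_matrix N W -> (1 <= N)%nat ->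
  balanced N (fun x y => neutral_rate d N W y x) pi ->
  drift N (step_prob d N W 1) pi C = 0.
Proof.
  intros HW HN Hbal. unfold drift.
  rewrite (dsum_ext N _ (fun i j => / INR N *
    (neutral_rate d N W i j * ((indb (C i) - indb (C j)) * pi j))))
    by (intros; rewrite step_prob_neutral by auto; ring).
  rewrite dsum_scal, balanced_flux_zero by auto. ring.
Qed.

(* Without vertices the empty configuration is full only at time 0. *)
Lemma fixation_empty_graph d W r C : Un_cv (fun t => prob_all_mutant d 0 W r t C) 0.
Proof.
  intros e He. exists 1%nat. intros [|n] Hn; [lia|].
  simpl. unfold Rdist. rewrite Rminus_diag, Rabs_R0; lra.
Qed.

Theorem theorem5 (d : Dynamics) (N : nat) (W : nat -> nat -> R)
  (C : nat -> bool) (r : R) :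
  is_weight_matrix N W -> strongly_connected N W -> r > 1 ->
  exists F1 Fr : R,
    Un_cv (fun t => prob_all_mutant d N W 1 t C) F1 /\
    Un_cv (fun t => prob_all_mutant d N W r t C) Fr /\
    F1 <= Fr.
Proof.
  intros HW HS Hr. destruct (Nat.eq_0_gt_0_cases N) as [->|HN].
  { exists 0, 0. split; [|split]; [apply fixation_empty_graph..|lra]. }
  destruct (stationary_exists N (fun x y => neutral_rate d N W y x)) as [pi [Hpi0 [Hpi1 Hbal]]];
    [auto|intros; apply neutral_rate_nonneg; auto|].
  pose proof (step_prob_stochastic d N W 1 HW HS HN (Rle_refl 1)) as HP1.
  pose proof (step_prob_stochastic d N W r HW HS HN ltac:(lra)) as HPr.
  destruct (fixation_exists N _ HP1) as [g1 Hg1].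
  destruct (fixation_exists N _ HPr) as [gr Hgr].
  exists (g1 C), (gr C). split; [|split].
  - apply (Un_cv_ext _ _ _ (fun t => prob_all_mutant_absorb d N W 1 t C)), Hg1.
  - apply (Un_cv_ext _ _ _ (fun t => prob_all_mutant_absorb d N W r t C)), Hgr.
  - (* neutral fixation <= stationary potential <= fixation under selection *)
    apply Rle_trans with (potential N pi C).
    + apply (fixation_le_potential N _ HP1 pi g1); auto.
      intros C'. rewrite neutral_drift_zero by auto. lra.
    + destruct (step_prob_mixing d N W r HW HS HN ltac:(lra)) as [dl [Hdl Hmix]].
      apply (potential_le_fixation N _ pi gr dl HPr); auto.
      intros C'. apply (drift_nonneg N _ (neutral_rate d N W)); auto.
      apply step_prob_favours_mutants; auto; lra.
Qed.
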